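(* Let $n\ge 1$, $s_1,\dots,s_n\in[0,1)$ and $v_1,\dots,v_n\in\mathbb{R}$, and let $k:=|\{v_1,\dots,v_n\}|$ be the number of distinct values among the $v_i$. Then there exists $t\in\mathbb{R}$ such that $$B(s_1+v_1t,\dots,s_n+v_nt)\ \ge\ \sqrt{k/12}.$$
   Context: For $r\in\mathbb{R}$, $\{r\}:=r-\lfloor r\rfloor$ is the fractional part. For $r_1,\dots,r_n\in\mathbb{R}$ and $0\le a\le b\le 1$ let $N_{a,b}(r_1,\dots,r_n):=|\{i:\{r_i\}\in[a,b]\}|$. The bias is $$B(r_1,\dots,r_n):=\sup_{0\le a\le b\le 1}\big|N_{a,b}(r_1,\dots,r_n)-n(b-a)\big|.$$ (Equivalently, it is $n$ times the usual discrepancy of $\{r_1\},\dots,\{r_n\}$.) *)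

From Stdlib Require Import Reals Lra Lia List.
Import ListNotations.
Open Scope R_scope.

(* floor r = up r - 1, since  r < IZR (up r) <= r + 1 *)
Definition floorR (r : R) : Z := (up r - 1)%Z.
Definition frac (r : R) : R := r - IZR (floorR r).

(* Finite sequences r_1..r_n are represented as functions r : nat -> R,
   using the indices 0..n-1. *)
Definition in_interval (a b x : R) : bool :=
  if Rle_dec a x then (if Rle_dec x b then true else false) else false.

Definition Ncount (n : nat) (r : nat -> R) (a b : R) : nat :=
  length (filter (fun i => in_interval a b (frac (r i))) (seq 0 n)).

Definition bias_set (n : nat) (r : nat -> R) (x : R) : Prop :=
  exists a b, 0 <= a /\ a <= b /\ b <= 1 /\
    x = Rabs (INR (Ncount n r a b) - INR n * (b - a)).

Lemma bias_set_bounded (n : nat) (r : nat -> R) :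
  bound (bias_set n r).
Proof.
  exists (INR n + INR n). intros x [a [b [Ha [Hab [Hb Hx]]]]]. subst x.
  assert (H0 : (Ncount n r a b <= n)%nat).
  { unfold Ncount. rewrite <- (length_seq n 0) at 2. apply filter_length_le. }
  apply le_INR in H0.
  assert (0 <= INR n) by apply pos_INR.
  assert (0 <= INR (Ncount n r a b)) by apply pos_INR.
  apply Rabs_le. split; nra.
Qed.

Lemma bias_set_nonempty (n : nat) (r : nat -> R) :
  exists x, bias_set n r x.
Proof.
  eexists. exists 0, 0. repeat split; lra.
Qed.

Definition bias (n : nat) (r : nat -> R) : R :=
  proj1_sig (completeness (bias_set n r) (bias_set_bounded n r)
                          (bias_set_nonempty n r)).

Definition num_distinct (n : nat) (v : nat -> R) : nat :=
  length (nodup Req_EM_T (map v (seq 0 n))).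

From Stdlib Require Import Reals List Lra Lia ZArith.
From Coquelicot Require Import Coquelicot.
Open Scope R_scope.

(* Write r_i = s_i + v_i t, saw(x) = {x} - 1/2 and h(y) = sum_i saw(y - r_i).
   1. For 0 <= y' < y < 1, h(y) - h(y') = n (y - y') - N_{a,y} with a just
      above y', so every oscillation |h(y) - h(y')| is at most the bias B;
      hence (h - c)^2 <= B^2/4 everywhere for a suitable constant c.
   2. int_0^1 saw(y - a) saw(y - b) dy = corr(a - b) := B_2({a - b})/2 (B_2 the
      second Bernoulli polynomial) and int_0^1 saw = 0, so the pair energy
      sum_{i,l} corr(r_i - r_l) = int_0^1 (h - c)^2 - c^2 is at most B^2/4.
   3. corr has the bounded periodic primitive B_3({d})/6, so every pair with
      v_i <> v_l contributes a term with bounded primitive in t; by the mean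
      value theorem, at some t the pair energy is within eps of the
      t-independent resonant energy E of the pairs with v_i = v_l.
   4. Grouping the indices by speed w, E = int_0^1 sum_w f_w(y)^2 dy where
      f_w(y) = g_w y - c_w - (an integer) and g_w >= 1 is the size of the
      class; the distance to the integers gives f_w^2 >= B_2({g_w y - c_w + 1/2})
      + 1/12, whose integral is 1/12, so E >= k/12.
   With eps = k/16 this yields B^2 >= 4 (k/12 - k/16) = k/12. *)

Lemma floorR_spec (x : R) : IZR (floorR x) <= x < IZR (floorR x) + 1.
Proof.
  unfold floorR. destruct (archimed x) as [H1 H2].
  rewrite minus_IZR. simpl. lra.
Qed.

Lemma frac_bounds (x : R) : 0 <= frac x < 1.
Proof. unfold frac. pose proof (floorR_spec x). lra. Qed.

Lemma frac_int_offset (x : R) : exists z, frac x = x - IZR z.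
Proof. exists (floorR x). reflexivity. Qed.

Lemma frac_unique (x : R) (z : Z) : 0 <= x - IZR z < 1 -> frac x = x - IZR z.
Proof.
  intros Hz. pose proof (floorR_spec x) as Hf.
  assert (Heq : floorR x = z).
  { assert (Hlt1 : IZR z < IZR (floorR x + 1)) by (rewrite plus_IZR; simpl; lra).
    assert (Hlt2 : IZR (floorR x) < IZR (z + 1)) by (rewrite plus_IZR; simpl; lra).
    apply lt_IZR in Hlt1. apply lt_IZR in Hlt2. lia. }
  unfold frac. rewrite Heq. reflexivity.
Qed.

Lemma frac_add_int (x : R) (z : Z) : frac (x + IZR z) = frac x.
Proof.
  rewrite (frac_unique (x + IZR z) (floorR x + z)).
  - unfold frac. rewrite plus_IZR. ring.
  - rewrite plus_IZR. pose proof (floorR_spec x). lra.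
Qed.

Lemma frac_sub_unit (y x : R) : 0 <= y < 1 -> 0 <= x < 1 ->
  frac (y - x) = if Rle_dec x y then y - x else y - x + 1.
Proof.
  intros Hy Hx. destruct (Rle_dec x y).
  - rewrite (frac_unique _ 0); simpl; lra.
  - rewrite (frac_unique _ (-1)); simpl; lra.
Qed.

Lemma frac_sub_frac_r (y r : R) : frac (y - r) = frac (y - frac r).
Proof.
  unfold frac at 3.
  replace (y - (r - IZR (floorR r))) with ((y - r) + IZR (floorR r)) by ring.
  symmetry. apply frac_add_int.
Qed.

Lemma frac_sub_frac (a b : R) : frac (a - b) = frac (frac a - frac b).
Proof.
  unfold frac at 3 4.
  replace (a - IZR (floorR a) - (b - IZR (floorR b)))
    with ((a - b) + IZR (floorR b - floorR a)) by (rewrite minus_IZR; ring).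
  symmetry. apply frac_add_int.
Qed.

Fixpoint sumR (n : nat) (f : nat -> R) : R :=
  match n with O => 0 | S m => sumR m f + f m end.

Lemma sumR_ext (n : nat) (f g : nat -> R) :
  (forall i, (i < n)%nat -> f i = g i) -> sumR n f = sumR n g.
Proof.
  induction n; simpl; intros H; [reflexivity|].
  rewrite IHn by (intros; apply H; lia). rewrite H by lia. reflexivity.
Qed.

Lemma sumR_plus (n : nat) (f g : nat -> R) :
  sumR n (fun i => f i + g i) = sumR n f + sumR n g.
Proof. induction n; simpl; [ring | rewrite IHn; ring]. Qed.

Lemma sumR_minus (n : nat) (f g : nat -> R) :
  sumR n (fun i => f i - g i) = sumR n f - sumR n g.
Proof. induction n; simpl; [ring | rewrite IHn; ring]. Qed.

Lemma sumR_mult_l (n : nat) (c : R) (f : nat -> R) :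
  c * sumR n f = sumR n (fun i => c * f i).
Proof. induction n; simpl; [ring | rewrite <- IHn; ring]. Qed.

Lemma sumR_const (n : nat) (c : R) : sumR n (fun _ => c) = INR n * c.
Proof. induction n; simpl sumR; [simpl; ring | rewrite IHn, S_INR; ring]. Qed.

Lemma sumR_abs_le (n : nat) (f g : nat -> R) :
  (forall i, (i < n)%nat -> Rabs (f i) <= g i) -> Rabs (sumR n f) <= sumR n g.
Proof.
  induction n; simpl; intros H.
  - rewrite Rabs_R0; lra.
  - eapply Rle_trans; [apply Rabs_triang|].
    pose proof (H n ltac:(lia)). pose proof (IHn ltac:(intros; apply H; lia)). lra.
Qed.

Lemma sumR_square (n : nat) (f : nat -> R) :
  sumR n f * sumR n f = sumR n (fun i => sumR n (fun l => f i * f l)).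
Proof.
  rewrite sumR_mult_l. apply sumR_ext. intros i _.
  rewrite Rmult_comm. apply sumR_mult_l.
Qed.

Lemma sumR_count (n : nat) (p : nat -> bool) :
  INR (length (filter p (seq 0 n))) = sumR n (fun i => if p i then 1 else 0).
Proof.
  induction n; [reflexivity|].
  rewrite seq_S, filter_app, length_app, plus_INR, IHn. simpl.
  destruct (p n); simpl; lra.
Qed.

Fixpoint sumL (L : list R) (F : R -> R) : R :=
  match L with nil => 0 | w :: L' => F w + sumL L' F end.

Lemma sumL_ext (L : list R) (F G : R -> R) :
  (forall w, In w L -> F w = G w) -> sumL L F = sumL L G.
Proof.
  induction L; simpl; intros H; [reflexivity|].
  rewrite H by (left; reflexivity). rewrite IHL by (intros; apply H; right; assumption).
  reflexivity.
Qed.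

Lemma sumL_le (L : list R) (F G : R -> R) :
  (forall w, In w L -> F w <= G w) -> sumL L F <= sumL L G.
Proof.
  induction L; simpl; intros H; [lra|].
  pose proof (H a (or_introl eq_refl)). pose proof (IHL (fun w Hw => H w (or_intror Hw))). lra.
Qed.

Lemma sumL_const (L : list R) (c : R) : sumL L (fun _ => c) = INR (length L) * c.
Proof. induction L; simpl sumL; [simpl; ring | rewrite IHL; simpl length; rewrite S_INR; ring]. Qed.

Lemma sumL_sumR (L : list R) (n : nat) (F : R -> nat -> R) :
  sumL L (fun w => sumR n (fun i => F w i)) = sumR n (fun i => sumL L (fun w => F w i)).
Proof.
  induction L; simpl.
  - rewrite (sumR_const n 0). ring.
  - rewrite IHL, <- sumR_plus. reflexivity.
Qed.

Lemma sumL_pick (L : list R) (a : R) (X : R -> R) : NoDup L -> In a L ->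
  sumL L (fun w => if Req_EM_T a w then X w else 0) = X a.
Proof.
  induction L as [|b L IH]; simpl; intros Hnd Hin; [contradiction|].
  inversion Hnd as [|? ? Hb Hnd']; subst.
  destruct (Req_EM_T a b) as [<-|Hab].
  - rewrite (sumL_ext L _ (fun _ => 0)), sumL_const; [ring|].
    intros w Hw. destruct (Req_EM_T a w) as [<-|]; [contradiction|reflexivity].
  - destruct Hin as [->|Hin]; [contradiction|]. rewrite IH; auto. ring.
Qed.

Definition saw (x : R) : R := frac x - 1/2.

Definition saw_sum (n : nat) (r : nat -> R) (y : R) : R :=
  sumR n (fun i => saw (y - r i)).

Lemma bias_set_le_bias (n : nat) (r : nat -> R) (x : R) :
  bias_set n r x -> x <= bias n r.
Proof.
  intros Hx. unfold bias. exact (proj1 (proj2_sig (completeness _ _ _)) x Hx).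
Qed.

Lemma bias_nonneg (n : nat) (r : nat -> R) : 0 <= bias n r.
Proof.
  eapply Rle_trans; [apply Rabs_pos|].
  apply bias_set_le_bias. exists 0, 0. repeat split; lra.
Qed.

Lemma in_interval_spec (a b x : R) : in_interval a b x = true <-> a <= x <= b.
Proof.
  unfold in_interval.
  destruct (Rle_dec a x), (Rle_dec x b); split; intros; try lra; easy.
Qed.

Lemma saw_sum_frac (n : nat) (r : nat -> R) (y : R) :
  saw_sum n r y = saw_sum n r (frac y).
Proof.
  unfold saw_sum. apply sumR_ext. intros i _. unfold saw.
  destruct (frac_int_offset y) as [z ->].
  replace (y - IZR z - r i) with ((y - r i) + IZR (- z)) by (rewrite opp_IZR; ring).
  rewrite frac_add_int. reflexivity.
Qed.

Lemma saw_increment (x y y' d : R) :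
  0 <= y' -> y' < y -> y < 1 -> 0 < d -> d <= y - y' ->
  frac x <= y' \/ y' + d <= frac x ->
  saw (y - x) - saw (y' - x) = (y - y') - (if in_interval (y' + d) y (frac x) then 1 else 0).
Proof.
  intros Hy'0 Hlt Hy1 Hd Hdy Hgap. unfold saw.
  rewrite (frac_sub_frac_r y), (frac_sub_frac_r y').
  pose proof (frac_bounds x). rewrite !frac_sub_unit by lra.
  destruct (in_interval _ _ _) eqn:E.
  - apply in_interval_spec in E. destruct (Rle_dec (frac x) y), (Rle_dec (frac x) y'); lra.
  - assert (~ (y' + d <= frac x <= y)) by (rewrite <- in_interval_spec; congruence).
    destruct (Rle_dec (frac x) y), (Rle_dec (frac x) y'); lra.
Qed.

Lemma saw_sum_increment (n : nat) (r : nat -> R) (y y' d : R) :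
  0 <= y' -> y' < y -> y < 1 -> 0 < d -> d <= y - y' ->
  (forall i, (i < n)%nat -> frac (r i) <= y' \/ y' + d <= frac (r i)) ->
  saw_sum n r y - saw_sum n r y' = INR n * (y - y') - INR (Ncount n r (y' + d) y).
Proof.
  intros Hy'0 Hlt Hy1 Hd Hdy Hgap.
  unfold saw_sum, Ncount. rewrite sumR_count, <- sumR_const, <- !sumR_minus.
  apply sumR_ext. intros i Hi. apply saw_increment; auto.
Qed.

Lemma gap_above (n : nat) (x : nat -> R) (y : R) :
  exists d, 0 < d /\ forall i, (i < n)%nat -> x i <= y \/ y + d <= x i.
Proof.
  induction n as [|n [d [Hd Hgap]]].
  - exists 1. split; [lra | intros; lia].
  - destruct (Rle_dec (x n) y) as [Hle|Hgt].
    + exists d. split; [exact Hd|]. intros i Hi.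
      destruct (Nat.eq_dec i n) as [->|]; [left; exact Hle | apply Hgap; lia].
    + exists (Rmin d (x n - y)). split; [apply Rmin_glb_lt; lra|].
      pose proof (Rmin_l d (x n - y)). pose proof (Rmin_r d (x n - y)).
      intros i Hi. destruct (Nat.eq_dec i n) as [->|Hne]; [right; lra|].
      destruct (Hgap i ltac:(lia)); [left | right]; lra.
Qed.

Lemma abs_le_of_perturbations (c D B d0 : R) :
  0 <= c -> 0 < d0 -> (forall d, 0 < d <= d0 -> Rabs (c * d - D) <= B) -> Rabs D <= B.
Proof.
  intros Hc Hd0 H. apply Rnot_lt_le. intros HB.
  set (e := (Rabs D - B) / (2 * (c + 1))).
  assert (He : 0 < e) by (apply Rdiv_lt_0_compat; lra).
  set (d := Rmin d0 e).
  assert (Hd : 0 < d <= d0) by (split; [apply Rmin_glb_lt | apply Rmin_l]; lra).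
  assert (Hcd : c * d <= (Rabs D - B) / 2).
  { assert (d <= e) by apply Rmin_r.
    assert ((c + 1) * e = (Rabs D - B) / 2) by (unfold e; field; lra). nra. }
  pose proof (H d Hd) as Hpert. pose proof (Rabs_triang_inv D (c * d)) as Htri.
  rewrite Rabs_minus_sym, (Rabs_right (c * d)) in Htri by nra. lra.
Qed.

Lemma saw_sum_oscillation_ordered (n : nat) (r : nat -> R) (y y' : R) :
  0 <= y' -> y' < y -> y < 1 -> Rabs (saw_sum n r y - saw_sum n r y') <= bias n r.
Proof.
  intros Hy'0 Hlt Hy1.
  destruct (gap_above n (fun i => frac (r i)) y') as [d0 [Hd0 Hgap]].
  apply (abs_le_of_perturbations (INR n) _ _ (Rmin d0 (y - y'))).
  - apply pos_INR.
  - apply Rmin_glb_lt; lra.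
  - intros d [Hd Hdle]. pose proof (Rmin_l d0 (y - y')). pose proof (Rmin_r d0 (y - y')).
    rewrite (saw_sum_increment n r y y' d) by (try intros i Hi; try destruct (Hgap i Hi); lra).
    apply bias_set_le_bias. exists (y' + d), y. repeat split; try lra. f_equal. ring.
Qed.

Lemma saw_sum_oscillation (n : nat) (r : nat -> R) (y y' : R) :
  Rabs (saw_sum n r y - saw_sum n r y') <= bias n r.
Proof.
  rewrite (saw_sum_frac n r y), (saw_sum_frac n r y').
  pose proof (frac_bounds y). pose proof (frac_bounds y').
  destruct (Rtotal_order (frac y) (frac y')) as [Hl|[Hl|Hl]].
  - rewrite Rabs_minus_sym. apply saw_sum_oscillation_ordered; lra.
  - rewrite Hl, Rminus_diag, Rabs_R0. apply bias_nonneg.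
  - apply saw_sum_oscillation_ordered; lra.
Qed.

(* A function of oscillation at most B stays within B/2 of the midpoint of
   its range. *)
Lemma center_of_bounded_oscillation (h : R -> R) (B : R) :
  (forall y y', Rabs (h y - h y') <= B) ->
  exists c, forall y, (h y - c) * (h y - c) <= B * B / 4.
Proof.
  intros HB.
  assert (Hb1 : bound (fun z => exists y, z = h y)).
  { exists (h 0 + B). intros z [y ->]. pose proof (HB y 0) as Hy. apply Rabs_le_between in Hy. lra. }
  assert (Hb2 : bound (fun z => exists y, z = - h y)).
  { exists (- h 0 + B). intros z [y ->]. pose proof (HB 0 y) as Hy. apply Rabs_le_between in Hy. lra. }
  destruct (completeness _ Hb1 (ex_intro _ (h 0) (ex_intro _ 0 eq_refl))) as [M [HM1 HM2]].
  destruct (completeness _ Hb2 (ex_intro _ (- h 0) (ex_intro _ 0 eq_refl))) as [M' [HM1' HM2']].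
  assert (Hup : forall y, h y <= M) by (intros y; apply HM1; exists y; reflexivity).
  assert (Hlo : forall y, - h y <= M') by (intros y; apply HM1'; exists y; reflexivity).
  assert (Hspan : M <= B - M').
  { apply HM2. intros z [y ->].
    assert (M' <= B - h y).
    { apply HM2'. intros z [y' ->]. pose proof (HB y y') as Hyy. apply Rabs_le_between in Hyy. lra. }
    lra. }
  exists ((M - M') / 2). intros y. pose proof (Hup y). pose proof (Hlo y).
  assert (Hdist : - (B / 2) <= h y - (M - M') / 2 <= B / 2) by lra. nra.
Qed.

(* Real-valued interfaces to Coquelicot's integration lemmas, stated with
   values in R so that ring and lra apply directly. *)
Lemma is_RInt_ext_R (f g : R -> R) (a b l : R) :
  (forall x, Rmin a b < x < Rmax a b -> f x = g x) -> is_RInt f a b l -> is_RInt g a b l.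
Proof. apply is_RInt_ext. Qed.

Lemma is_RInt_val (f : R -> R) (a b l l' : R) : is_RInt f a b l -> l = l' -> is_RInt f a b l'.
Proof. intros H <-. exact H. Qed.

Lemma is_RInt_const_R (a b c : R) : is_RInt (fun _ => c) a b ((b - a) * c).
Proof. apply (is_RInt_const (V := R_NormedModule)). Qed.

Lemma is_RInt_plus_R (f g : R -> R) (a b lf lg : R) :
  is_RInt f a b lf -> is_RInt g a b lg -> is_RInt (fun x => f x + g x) a b (lf + lg).
Proof. apply (is_RInt_plus (V := R_NormedModule)). Qed.

Lemma is_RInt_scal_R (f : R -> R) (a b c l : R) :
  is_RInt f a b l -> is_RInt (fun x => c * f x) a b (c * l).
Proof. apply (is_RInt_scal (V := R_NormedModule)). Qed.

Lemma is_RInt_Chasles_R (f : R -> R) (a b c l1 l2 : R) :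
  is_RInt f a b l1 -> is_RInt f b c l2 -> is_RInt f a c (l1 + l2).
Proof. apply (is_RInt_Chasles (V := R_NormedModule)). Qed.

Lemma is_RInt_sumR (n : nat) (f : nat -> R -> R) (I : nat -> R) (a b : R) :
  (forall i, (i < n)%nat -> is_RInt (f i) a b (I i)) ->
  is_RInt (fun y => sumR n (fun i => f i y)) a b (sumR n I).
Proof.
  induction n; intros H; simpl.
  - eapply is_RInt_val; [apply is_RInt_const_R | ring].
  - apply is_RInt_plus_R; [apply IHn; intros i Hi |]; apply H; lia.
Qed.

Lemma is_RInt_sumL (L : list R) (f : R -> R -> R) (I : R -> R) (a b : R) :
  (forall w, In w L -> is_RInt (f w) a b (I w)) ->
  is_RInt (fun y => sumL L (fun w => f w y)) a b (sumL L I).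
Proof.
  induction L; intros H; simpl.
  - eapply is_RInt_val; [apply is_RInt_const_R | ring].
  - apply is_RInt_plus_R; [apply H; left | apply IHL; intros; apply H; right]; auto.
Qed.

Lemma is_RInt_affine (p a b : R) :
  is_RInt (fun y => y - p) a b ((b * b / 2 - p * b) - (a * a / 2 - p * a)).
Proof.
  apply (is_RInt_derive (fun y => y * y / 2 - p * y)).
  - intros x _. auto_derive; [auto | field].
  - intros x _. apply (ex_derive_continuous (fun y => y - p)). auto_derive; auto.
Qed.

Definition quad_prim (p q y : R) : R := y * y * y / 3 - (p + q) * y * y / 2 + p * q * y.

Lemma is_RInt_quadratic (p q a b : R) :
  is_RInt (fun y => (y - p) * (y - q)) a b (quad_prim p q b - quad_prim p q a).
Proof.
  apply (is_RInt_derive (quad_prim p q)).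
  - intros x _. unfold quad_prim. auto_derive; [auto | field].
  - intros x _. apply (ex_derive_continuous (fun y => (y - p) * (y - q))). auto_derive; auto.
Qed.

Definition bern2 (x : R) : R := x * x - x + 1/6.

(* Correlation of two sawtooth waves shifted by d (Step 2). *)
Definition corr (d : R) : R := bern2 (frac d) / 2.

Lemma saw_sub_unit (c y : R) : 0 <= c < 1 -> 0 <= y < 1 ->
  saw (y - c) = if Rle_dec c y then y - (c + 1/2) else y - (c - 1/2).
Proof.
  intros Hc Hy. unfold saw. rewrite frac_sub_unit by lra. destruct (Rle_dec c y); field.
Qed.

Lemma saw_integral (a : R) : is_RInt (fun y => saw (y - a)) 0 1 0.
Proof.
  apply (is_RInt_ext_R (fun y => saw (y - frac a))).
  { intros y _. unfold saw. rewrite (frac_sub_frac_r y a). reflexivity. }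
  pose proof (frac_bounds a) as Ha. set (u := frac a) in *.
  eapply is_RInt_val; [apply (is_RInt_Chasles_R _ 0 u 1) |].
  - apply (is_RInt_ext_R (fun y => y - (u - 1/2))); [|apply is_RInt_affine].
    intros x Hx. rewrite Rmin_left, Rmax_right in Hx by lra.
    rewrite saw_sub_unit by lra. destruct (Rle_dec u x); [lra | reflexivity].
  - apply (is_RInt_ext_R (fun y => y - (u + 1/2))); [|apply is_RInt_affine].
    intros x Hx. rewrite Rmin_left, Rmax_right in Hx by lra.
    rewrite saw_sub_unit by lra. destruct (Rle_dec u x); [reflexivity | lra].
  - field.
Qed.

Lemma saw_saw_integral_ordered (a b : R) : 0 <= a -> a <= b -> b < 1 ->
  is_RInt (fun y => saw (y - a) * saw (y - b)) 0 1 (bern2 (b - a) / 2).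
Proof.
  intros Ha Hab Hb.
  assert (Hpiece : forall p q u w, 0 <= u <= w -> w <= 1 ->
    (forall y, u < y < w -> saw (y - a) * saw (y - b) = (y - p) * (y - q)) ->
    is_RInt (fun y => saw (y - a) * saw (y - b)) u w (quad_prim p q w - quad_prim p q u)).
  { intros p q u w Huw Hw Heq. eapply is_RInt_ext_R; [|apply is_RInt_quadratic].
    intros x Hx. rewrite Rmin_left, Rmax_right in Hx by lra. symmetry. apply Heq. lra. }
  eapply is_RInt_val;
    [apply (is_RInt_Chasles_R _ 0 b 1); [apply (is_RInt_Chasles_R _ 0 a b) |] |].
  - apply (Hpiece (a - 1/2) (b - 1/2)); [lra | lra |]. intros y Hy.
    rewrite !saw_sub_unit by lra. destruct (Rle_dec a y); [lra|]. destruct (Rle_dec b y); [lra|]. reflexivity.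
  - apply (Hpiece (a + 1/2) (b - 1/2)); [lra | lra |]. intros y Hy.
    rewrite !saw_sub_unit by lra. destruct (Rle_dec a y); [|lra]. destruct (Rle_dec b y); [lra|]. reflexivity.
  - apply (Hpiece (a + 1/2) (b + 1/2)); [lra | lra |]. intros y Hy.
    rewrite !saw_sub_unit by lra. destruct (Rle_dec a y); [|lra]. destruct (Rle_dec b y); [|lra]. reflexivity.
  - unfold quad_prim, bern2. field.
Qed.

Lemma saw_saw_integral (a b : R) :
  is_RInt (fun y => saw (y - a) * saw (y - b)) 0 1 (corr (a - b)).
Proof.
  assert (Hred : forall y, saw (y - a) * saw (y - b) = saw (y - frac a) * saw (y - frac b)).
  { intros y. unfold saw. rewrite (frac_sub_frac_r y a), (frac_sub_frac_r y b). reflexivity. }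
  pose proof (frac_bounds a) as Ha. pose proof (frac_bounds b) as Hb.
  unfold corr. rewrite frac_sub_frac.
  destruct (Rle_dec (frac a) (frac b)) as [Hab|Hba].
  - apply (is_RInt_ext_R (fun y => saw (y - frac a) * saw (y - frac b))); [intros; symmetry; apply Hred|].
    destruct (Req_dec (frac a) (frac b)) as [Heq|Hne].
    + rewrite Heq, Rminus_diag, (frac_unique 0 0) by (simpl; lra).
      replace (0 - IZR 0) with (frac b - frac b) by (simpl; ring).
      apply saw_saw_integral_ordered; lra.
    + rewrite (frac_unique (frac a - frac b) (-1)) by (simpl; lra).
      replace (bern2 (frac a - frac b - IZR (-1))) with (bern2 (frac b - frac a))
        by (unfold bern2; simpl; ring).
      apply saw_saw_integral_ordered; lra.
  - apply (is_RInt_ext_R (fun y => saw (y - frac b) * saw (y - frac a))).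
    { intros y _. rewrite Hred. ring. }
    rewrite (frac_unique (frac a - frac b) 0) by (simpl; lra).
    replace (frac a - frac b - IZR 0) with (frac a - frac b) by (simpl; ring).
    apply saw_saw_integral_ordered; lra.
Qed.

Definition pair_energy (n : nat) (r : nat -> R) : R :=
  sumR n (fun i => sumR n (fun l => corr (r i - r l))).

Lemma saw_sum_mean_square (n : nat) (r : nat -> R) (c : R) :
  is_RInt (fun y => (saw_sum n r y - c) * (saw_sum n r y - c)) 0 1 (pair_energy n r + c * c).
Proof.
  apply (is_RInt_ext_R (fun y =>
    (sumR n (fun i => sumR n (fun l => saw (y - r i) * saw (y - r l)))
     + sumR n (fun i => (-2 * c) * saw (y - r i))) + c * c)).
  { intros y _. unfold saw_sum. rewrite <- sumR_square, <- sumR_mult_l. ring. }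
  eapply is_RInt_val; [apply is_RInt_plus_R; [apply is_RInt_plus_R |] |].
  - apply is_RInt_sumR. intros i _.
    apply (is_RInt_sumR n (fun l y => saw (y - r i) * saw (y - r l))). intros l _.
    apply saw_saw_integral.
  - apply (is_RInt_sumR n (fun i y => (-2 * c) * saw (y - r i))). intros i _.
    apply is_RInt_scal_R, saw_integral.
  - apply is_RInt_const_R.
  - unfold pair_energy. rewrite <- sumR_mult_l, sumR_const. ring.
Qed.

Lemma pair_energy_le_bias (n : nat) (r : nat -> R) :
  pair_energy n r <= bias n r * bias n r / 4.
Proof.
  destruct (center_of_bounded_oscillation (saw_sum n r) (bias n r) (saw_sum_oscillation n r))
    as [c Hc].
  assert (Hint : pair_energy n r + c * c <= (1 - 0) * (bias n r * bias n r / 4)).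
  { apply (is_RInt_le _ _ 0 1 _ _ ltac:(lra) (saw_sum_mean_square n r c) (is_RInt_const_R 0 1 _)).
    intros y _. apply Hc. }
  pose proof (Rle_0_sqr c). unfold Rsqr in *. lra.
Qed.

(* The third Bernoulli polynomial B_3, a primitive of 3 B_2. *)
Definition bern3 (x : R) : R := x * (x - 1/2) * (x - 1).

Definition corr_prim (d : R) : R := bern3 (frac d) / 6.

Lemma cubic_remainder_le (E h m W : R) :
  E = h * h * m + 3 * W -> -2 <= m <= 2 -> - (h * h) <= W <= h * h -> Rabs E <= 5 * (h * h).
Proof. intros -> Hm HW. apply Rabs_le. assert (0 <= h * h) by nra. split; nra. Qed.

Lemma bern3_taylor (u v : R) (z : Z) : 0 <= u < 1 -> 0 <= v < 1 ->
  Rabs (v - u + IZR z) < 1/2 ->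
  Rabs (bern3 v - bern3 u - 3 * bern2 u * (v - u + IZR z))
    <= 5 * ((v - u + IZR z) * (v - u + IZR z)).
Proof.
  intros Hu Hv Hh. apply Rabs_def2 in Hh.
  assert (Hz : (-2 < z < 2)%Z) by (split; apply lt_IZR; simpl; lra).
  assert (Hcases : z = 0%Z \/ z = 1%Z \/ z = (-1)%Z) by lia.
  destruct Hcases as [-> | [-> | ->]]; simpl IZR in *.
  - pose proof (Rle_0_sqr (v - u + 0)). unfold Rsqr in *.
    apply (cubic_remainder_le _ _ (3 * u - 3/2 + (v - u + 0)) 0);
      [unfold bern3, bern2; field | lra | lra].
  - apply (cubic_remainder_le _ _ (3 * u - 3/2 + (v - u + 1)) (- (v * v)));
      [unfold bern3, bern2; field | lra | split; nra].
  - apply (cubic_remainder_le _ _ (3 * u - 3/2 + (v - u + -1)) ((v - 1) * (v - 1)));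
      [unfold bern3, bern2; field | lra | split; nra].
Qed.

Lemma corr_prim_deriv (x : R) : derivable_pt_lim corr_prim x (corr x).
Proof.
  intros eps Heps.
  assert (Hd : 0 < Rmin (1/2) eps) by (apply Rmin_glb_lt; lra).
  exists (mkposreal _ Hd). intros h Hh0 Hh. simpl in Hh.
  pose proof (Rmin_l (1/2) eps). pose proof (Rmin_r (1/2) eps).
  destruct (frac_int_offset x) as [z0 Hz0]. destruct (frac_int_offset (x + h)) as [z1 Hz1].
  pose proof (frac_bounds x). pose proof (frac_bounds (x + h)).
  assert (Eh : h = frac (x + h) - frac x + IZR (z1 - z0)) by (rewrite minus_IZR; lra).
  pose proof (bern3_taylor (frac x) (frac (x + h)) (z1 - z0)) as Htaylor.
  rewrite <- Eh in Htaylor. specialize (Htaylor ltac:(lra) ltac:(lra) ltac:(lra)).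
  unfold corr_prim, corr.
  replace ((bern3 (frac (x + h)) / 6 - bern3 (frac x) / 6) / h - bern2 (frac x) / 2)
    with ((bern3 (frac (x + h)) - bern3 (frac x) - 3 * bern2 (frac x) * h) / (6 * h))
    by (field; auto).
  assert (Hah : 0 < Rabs h) by (apply Rabs_pos_lt; auto).
  unfold Rdiv. rewrite Rabs_mult, Rabs_inv, Rabs_mult, (Rabs_right 6) by lra.
  assert (Hsq : h * h = Rabs h * Rabs h).
  { rewrite <- Rabs_mult, Rabs_right; [reflexivity | apply Rle_ge, Rle_0_sqr]. }
  rewrite Hsq in Htaylor.
  apply Rle_lt_trans with (5 * (Rabs h * Rabs h) * / (6 * Rabs h)).
  - apply Rmult_le_compat_r; [apply Rlt_le, Rinv_0_lt_compat; lra | exact Htaylor].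
  - replace (5 * (Rabs h * Rabs h) * / (6 * Rabs h)) with (5/6 * Rabs h) by (field; lra). lra.
Qed.

Lemma corr_prim_affine_deriv (c w t : R) : w <> 0 ->
  derivable_pt_lim (fun t => corr_prim (c + w * t) / w) t (corr (c + w * t)).
Proof.
  intros Hw. apply is_derive_Reals.
  apply (is_derive_ext (fun t => / w * corr_prim (c + w * t))); [intros; apply Rmult_comm|].
  replace (corr (c + w * t)) with (/ w * (w * corr (c + w * t))) by (field; exact Hw).
  apply is_derive_scal.
  apply (is_derive_comp corr_prim (fun t => c + w * t)).
  - apply is_derive_Reals, corr_prim_deriv.
  - auto_derive; [auto | ring].
Qed.

Lemma corr_prim_bound (d : R) : Rabs (corr_prim d) <= 1.
Proof.
  unfold corr_prim, bern3. pose proof (frac_bounds d). set (x := frac d) in *.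
  assert (0 <= x * (1 - x) <= 1) by nra.
  apply Rabs_le. split; nra.
Qed.

Lemma deriv_sumR (n : nat) (f df : nat -> R -> R) (t : R) :
  (forall i, (i < n)%nat -> derivable_pt_lim (f i) t (df i t)) ->
  derivable_pt_lim (fun t => sumR n (fun i => f i t)) t (sumR n (fun i => df i t)).
Proof.
  induction n; intros H; simpl.
  - apply derivable_pt_lim_const.
  - apply (derivable_pt_lim_plus (fun t => sumR n (fun i => f i t)) (f n));
      [apply IHn; intros i Hi |]; apply H; lia.
Qed.

Lemma bounded_has_derivative_above (H f : R -> R) (C eps : R) : 0 < eps ->
  (forall t, derivable_pt_lim H t (f t)) -> (forall t, Rabs (H t) <= C) ->
  exists t, - eps < f t.
Proof.
  intros Heps Hder HC.
  assert (HC0 : 0 <= C) by (eapply Rle_trans; [apply Rabs_pos | apply (HC 0)]).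
  set (T := (2 * C + 1) / eps).
  assert (HT : 0 < T) by (apply Rdiv_lt_0_compat; lra).
  assert (HepsT : eps * T = 2 * C + 1) by (unfold T; field; lra).
  destruct (MVT_cor2 H f 0 T HT (fun c _ => Hder c)) as [t [Hmvt _]].
  exists t. rewrite Rminus_0_r in Hmvt.
  pose proof (proj1 (Rabs_le_between _ _) (HC T)). pose proof (proj1 (Rabs_le_between _ _) (HC 0)).
  nra.
Qed.

Section TimeAverage.
Variables (n : nat) (s v : nat -> R).

Definition resonant_energy : R :=
  sumR n (fun i => sumR n (fun l =>
    if Req_EM_T (v i) (v l) then corr (s i - s l) else 0)).

Definition cross_term (i l : nat) (t : R) : R :=
  if Req_EM_T (v i) (v l) then 0 else corr (s i - s l + (v i - v l) * t).

Definition cross_prim (i l : nat) (t : R) : R :=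
  if Req_EM_T (v i) (v l) then 0 else corr_prim (s i - s l + (v i - v l) * t) / (v i - v l).

Definition cross_bound (i l : nat) : R :=
  if Req_EM_T (v i) (v l) then 0 else / Rabs (v i - v l).

Lemma pair_energy_split (t : R) :
  pair_energy n (fun i => s i + v i * t)
  = resonant_energy + sumR n (fun i => sumR n (fun l => cross_term i l t)).
Proof.
  unfold pair_energy, resonant_energy, cross_term. rewrite <- sumR_plus.
  apply sumR_ext. intros i _. rewrite <- sumR_plus. apply sumR_ext. intros l _.
  destruct (Req_EM_T (v i) (v l)) as [e|e].
  - rewrite e, Rplus_0_r. f_equal. ring.
  - rewrite Rplus_0_l. f_equal. ring.
Qed.

Lemma cross_prim_deriv (i l : nat) (t : R) : derivable_pt_lim (cross_prim i l) t (cross_term i l t).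
Proof.
  unfold cross_prim, cross_term. destruct (Req_EM_T (v i) (v l)) as [e|e].
  - apply derivable_pt_lim_const.
  - apply corr_prim_affine_deriv. intros h. apply e. lra.
Qed.

Lemma cross_prim_bound (i l : nat) (t : R) : Rabs (cross_prim i l t) <= cross_bound i l.
Proof.
  unfold cross_prim, cross_bound. destruct (Req_EM_T (v i) (v l)) as [e|e].
  - rewrite Rabs_R0. lra.
  - assert (0 < Rabs (v i - v l)) by (apply Rabs_pos_lt; intros h; apply e; lra).
    unfold Rdiv. rewrite Rabs_mult, Rabs_inv.
    pose proof (corr_prim_bound (s i - s l + (v i - v l) * t)).
    pose proof (Rabs_pos (corr_prim (s i - s l + (v i - v l) * t))).
    assert (0 < / Rabs (v i - v l)) by (apply Rinv_0_lt_compat; assumption). nra.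
Qed.

Lemma energy_near_resonant (eps : R) : 0 < eps ->
  exists t, resonant_energy - eps <= pair_energy n (fun i => s i + v i * t).
Proof.
  intros Heps.
  destruct (bounded_has_derivative_above
    (fun t => sumR n (fun i => sumR n (fun l => cross_prim i l t)))
    (fun t => sumR n (fun i => sumR n (fun l => cross_term i l t)))
    (sumR n (fun i => sumR n (fun l => cross_bound i l))) eps Heps) as [t Ht].
  - intros t.
    apply (deriv_sumR n (fun i t => sumR n (fun l => cross_prim i l t))
                        (fun i t => sumR n (fun l => cross_term i l t))).
    intros i _. apply (deriv_sumR n (fun l t => cross_prim i l t) (fun l t => cross_term i l t)).
    intros l _. apply cross_prim_deriv.
  - intros t. apply sumR_abs_le. intros i _. apply sumR_abs_le. intros l _. apply cross_prim_bound.
  - exists t. rewrite pair_energy_split. lra.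
Qed.

End TimeAverage.

Lemma bern2_lipschitz (u v : R) (z : Z) : 0 <= u < 1 -> 0 <= v < 1 ->
  Rabs (v - u + IZR z) < 1/2 -> Rabs (bern2 v - bern2 u) <= 4 * Rabs (v - u + IZR z).
Proof.
  intros Hu Hv Hh. apply Rabs_def2 in Hh.
  assert (Hz : (-2 < z < 2)%Z) by (split; apply lt_IZR; simpl; lra).
  assert (Hcases : z = 0%Z \/ z = 1%Z \/ z = (-1)%Z) by lia.
  unfold bern2. rewrite (Rabs_le_between (_ - _)).
  destruct Hcases as [-> | [-> | ->]]; simpl IZR in *.
  - destruct (Rle_dec 0 (v - u + 0)).
    + rewrite Rabs_right by lra. split; nra.
    + rewrite Rabs_left by lra. split; nra.
  - rewrite Rabs_right by lra. split; nra.
  - rewrite Rabs_left by lra. split; nra.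
Qed.

Lemma continuous_bern2_frac (x : R) : continuous (fun z => bern2 (frac z)) x.
Proof.
  apply continuity_pt_filterlim.
  intros eps Heps. exists (Rmin (1/2) (eps / 4)). split; [apply Rmin_glb_lt; lra|].
  intros y [_ Hy]. simpl in *. unfold R_dist in *.
  pose proof (Rmin_l (1/2) (eps/4)). pose proof (Rmin_r (1/2) (eps/4)).
  destruct (frac_int_offset x) as [z0 Hz0]. destruct (frac_int_offset y) as [z1 Hz1].
  pose proof (frac_bounds x). pose proof (frac_bounds y).
  assert (Eh : y - x = frac y - frac x + IZR (z1 - z0)) by (rewrite minus_IZR; lra).
  pose proof (bern2_lipschitz (frac x) (frac y) (z1 - z0)) as Hlip.
  rewrite <- Eh in Hlip. specialize (Hlip ltac:(lra) ltac:(lra) ltac:(lra)). lra.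
Qed.

Lemma bern2_frac_integral (g : nat) (d : R) : (1 <= g)%nat ->
  is_RInt (fun y => bern2 (frac (d + INR g * y))) 0 1 0.
Proof.
  intros Hg. assert (Hg' : 0 < INR g) by (apply lt_0_INR; lia).
  eapply is_RInt_val.
  - apply (is_RInt_derive (V := R_CompleteNormedModule)
      (fun y => 2 * (corr_prim (d + INR g * y) / INR g))).
    + intros x _. apply is_derive_Reals.
      replace (bern2 (frac (d + INR g * x))) with (2 * corr (d + INR g * x)) by (unfold corr; field).
      apply (derivable_pt_lim_scal (fun y => corr_prim (d + INR g * y) / INR g)).
      apply corr_prim_affine_deriv. lra.
    + intros x _. apply (continuous_comp (fun y => d + INR g * y) (fun z => bern2 (frac z))).
      * apply (ex_derive_continuous (fun y => d + INR g * y)). auto_derive; auto.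
      * apply continuous_bern2_frac.
  - unfold minus, plus, opp; simpl. rewrite Rmult_1_r, Rmult_0_r, Rplus_0_r.
    unfold corr_prim. rewrite INR_IZR_INZ, frac_add_int. ring.
Qed.

Lemma bern2_le_dist_sq (u : R) (z : Z) :
  bern2 (frac (u + 1/2)) + 1/12 <= (u - IZR z) * (u - IZR z).
Proof.
  destruct (frac_int_offset (u + 1/2)) as [m Hm]. pose proof (frac_bounds (u + 1/2)) as Hb.
  rewrite Hm in *. unfold bern2.
  replace ((u + 1/2 - IZR m) * (u + 1/2 - IZR m) - (u + 1/2 - IZR m) + 1/6 + 1/12)
    with ((u - IZR m) * (u - IZR m)) by field.
  destruct (Z.lt_total z m) as [Hlt|[Heq|Hgt]].
  - assert (IZR z <= IZR m - 1) by (rewrite <- minus_IZR; apply IZR_le; lia). nra.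
  - subst z. lra.
  - assert (IZR m + 1 <= IZR z) by (rewrite <- plus_IZR; apply IZR_le; lia). nra.
Qed.

Lemma masked_saw_sum_affine (n : nat) (p : nat -> bool) (s : nat -> R) (y : R) :
  exists z, sumR n (fun i => if p i then saw (y - s i) else 0)
    = INR (length (filter p (seq 0 n))) * y
      - sumR n (fun i => if p i then s i + 1/2 else 0) - IZR z.
Proof.
  rewrite sumR_count. induction n as [|n [z Hz]]; simpl.
  - exists 0%Z. simpl. ring.
  - rewrite Hz. destruct (p n).
    + destruct (frac_int_offset (y - s n)) as [z' Hz']. exists (z + z')%Z.
      unfold saw. rewrite Hz', plus_IZR. ring.
    + exists z. ring.
Qed.

Lemma filter_seq_nonempty (n : nat) (p : nat -> bool) (i : nat) :
  (i < n)%nat -> p i = true -> (1 <= length (filter p (seq 0 n)))%nat.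
Proof.
  intros Hi Hp.
  assert (Hin : In i (filter p (seq 0 n))) by (apply filter_In; split; [apply in_seq; lia | exact Hp]).
  destruct (filter p (seq 0 n)); [contradiction | simpl; lia].
Qed.

Section SpeedClasses.
Variables (n : nat) (s v : nat -> R).

Definition speeds : list R := nodup Req_EM_T (map v (seq 0 n)).

Definition in_class (w : R) (i : nat) : bool := if Req_EM_T (v i) w then true else false.

Definition class_saw (w y : R) : R :=
  sumR n (fun i => if in_class w i then saw (y - s i) else 0).

Definition class_shift (w : R) : R :=
  sumR n (fun i => if in_class w i then s i + 1/2 else 0).

Definition class_size (w : R) : nat := length (filter (in_class w) (seq 0 n)).

Definition class_lower (w y : R) : R :=
  bern2 (frac (INR (class_size w) * y - class_shift w + 1/2)) + 1/12.

Definition resonant_integrand (y : R) : R :=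
  sumR n (fun i => sumR n (fun l =>
    if Req_EM_T (v i) (v l) then saw (y - s i) * saw (y - s l) else 0)).

Lemma in_speeds (i : nat) : (i < n)%nat -> In (v i) speeds.
Proof. intros Hi. apply nodup_In, in_map, in_seq. lia. Qed.

Lemma speeds_in (w : R) : In w speeds -> exists i, (i < n)%nat /\ v i = w.
Proof.
  intros Hw. apply nodup_In, in_map_iff in Hw. destruct Hw as [i [Hvi Hi]].
  apply in_seq in Hi. exists i. split; [lia | exact Hvi].
Qed.

Lemma speeds_nonempty : (0 < n)%nat -> (1 <= length speeds)%nat.
Proof.
  intros Hn. pose proof (in_speeds 0 Hn) as Hin0.
  destruct speeds; [contradiction | simpl; lia].
Qed.

Lemma resonant_saw_as_classes (y : R) :
  resonant_integrand y = sumL speeds (fun w => class_saw w y * class_saw w y).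
Proof.
  unfold resonant_integrand, class_saw. rewrite (sumL_ext speeds _ _ (fun w _ => sumR_square n _)), sumL_sumR.
  apply sumR_ext. intros i Hi. rewrite sumL_sumR. apply sumR_ext. intros l Hl.
  rewrite (sumL_ext speeds _ (fun w => if Req_EM_T (v i) w then
       saw (y - s i) * (if in_class w l then saw (y - s l) else 0) else 0)).
  2:{ intros w _. unfold in_class. destruct (Req_EM_T (v i) w); ring. }
  rewrite sumL_pick by (apply NoDup_nodup || apply in_speeds; assumption).
  unfold in_class.
  destruct (Req_EM_T (v i) (v l)), (Req_EM_T (v l) (v i)); try ring; exfalso; auto.
Qed.

Lemma class_saw_sq_ge (w y : R) : class_lower w y <= class_saw w y * class_saw w y.
Proof.
  unfold class_lower, class_size, class_saw, class_shift.
  destruct (masked_saw_sum_affine n (in_class w) s y) as [z ->].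
  apply bern2_le_dist_sq.
Qed.

Lemma class_lower_integral (w : R) : In w speeds -> is_RInt (class_lower w) 0 1 (1/12).
Proof.
  intros Hw. destruct (speeds_in w Hw) as [i [Hi Hvi]].
  assert (Hsize : (1 <= class_size w)%nat).
  { apply (filter_seq_nonempty n _ i Hi). unfold in_class. destruct (Req_EM_T (v i) w); auto. }
  apply (is_RInt_val _ _ _ (0 + (1 - 0) * (1/12))); [apply is_RInt_plus_R | ring].
  2:{ apply is_RInt_const_R. }
  apply (is_RInt_ext_R (fun y => bern2 (frac ((- class_shift w + 1/2) + INR (class_size w) * y)))).
  - intros y _. f_equal. f_equal. ring.
  - apply bern2_frac_integral. exact Hsize.
Qed.

Lemma resonant_integrand_integral : is_RInt resonant_integrand 0 1 (resonant_energy n s v).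
Proof.
  apply (is_RInt_sumR n (fun i y => sumR n (fun l =>
    if Req_EM_T (v i) (v l) then saw (y - s i) * saw (y - s l) else 0))). intros i _.
  apply (is_RInt_sumR n (fun l y =>
    if Req_EM_T (v i) (v l) then saw (y - s i) * saw (y - s l) else 0)). intros l _.
  destruct (Req_EM_T (v i) (v l)).
  - apply saw_saw_integral.
  - eapply is_RInt_val; [apply is_RInt_const_R | ring].
Qed.

Lemma resonant_energy_ge : INR (num_distinct n v) / 12 <= resonant_energy n s v.
Proof.
  change (num_distinct n v) with (length speeds).
  assert (Hlower : is_RInt (fun y => sumL speeds (fun w => class_lower w y)) 0 1
                           (INR (length speeds) / 12)).
  { eapply is_RInt_val; [apply (is_RInt_sumL speeds _ (fun _ => 1/12)), class_lower_integral|].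
    rewrite sumL_const. field. }
  apply (is_RInt_le _ _ 0 1 _ _ ltac:(lra) Hlower resonant_integrand_integral).
  intros y _. rewrite resonant_saw_as_classes. apply sumL_le. intros w _. apply class_saw_sq_ge.
Qed.

End SpeedClasses.

(* Steps 2-4 with eps = k/16 give B^2/4 >= k/12 - k/16 = k/48. *)
Theorem theorem2p1 (n : nat) (s v : nat -> R) :
  (1 <= n)%nat ->
  (forall i, (i < n)%nat -> 0 <= s i /\ s i < 1) ->
  exists t : R,
    bias n (fun i => s i + v i * t) >= sqrt (INR (num_distinct n v) / 12).
Proof.
  intros Hn _.
  set (k := INR (num_distinct n v)).
  assert (Hk : 1 <= k) by (apply (le_INR 1), speeds_nonempty; lia).
  destruct (energy_near_resonant n s v (k / 16) ltac:(lra)) as [t Ht].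
  exists t. set (r := fun i => s i + v i * t) in *.
  pose proof (pair_energy_le_bias n r) as Hbias.
  pose proof (resonant_energy_ge n s v) as Hres. fold k in Hres.
  pose proof (bias_nonneg n r) as Hpos.
  apply Rle_ge. rewrite <- (sqrt_square (bias n r)) by exact Hpos.
  apply sqrt_le_1_alt. lra.
Qed.
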